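(* Let $\mathcal{A}$ be a unital C*-algebra and $X$ a Hilbert $\mathcal{A}$-bimodule, full and finite projective as a right $\mathcal{A}$-module, with finite basis $\{u_1,\dots,u_n\}$, and let $\sigma:\mathcal{O}_X\to\mathcal{O}_X$, $\sigma(T)=\sum_iu_iTu_i^*$. Then the restriction of $\sigma$ to $\mathcal{A}'\cap\mathcal{O}_X$ is a unital injective $*$-homomorphism, and this restriction does not depend on the choice of the basis of $X_{\mathcal{A}}$.
   Context: A Hilbert $\mathcal{A}$-bimodule is a right Hilbert $\mathcal{A}$-module $X$ (inner product $(\cdot|\cdot)_{\mathcal{A}}$) with an injective $*$-homomorphism $\phi:\mathcal{A}\to\mathcal{L}_{\mathcal{A}}(X_{\mathcal{A}})$. A basis is a finite set $\{u_i\}\subset X$ with $x=\sum_iu_i(u_i|x)_{\mathcal{A}}$ for all $x\in X$. $\mathcal{O}_X$ is the universal C*-algebra generated by a unital copy of $\mathcal{A}$ and elements $S_x$ ($x\in X$, linear in $x$) with $S_{xa}=S_xa$, $S_{\phi(a)x}=aS_x$, $S_x^*S_y=(x|y)_{\mathcal{A}}$, $\sum_iS_{u_i}S_{u_i}^*=I$; write $x$ for $S_x$. $\mathcal{A}'$ is the commutant of $\mathcal{A}$ in $\mathcal{O}_X$. *)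

From HB Require Import structures.
From mathcomp Require Import all_boot all_order all_algebra.
From mathcomp Require Import reals.
From mathcomp.real_closed Require Import complex.
Set Implicit Arguments. Unset Strict Implicit. Unset Printing Implicit Defensive.
Import Order.TTheory GRing.Theory Num.Theory.
Local Open Scope ring_scope.

Section CStar.
Variable R : realType.
Local Notation C := R[i].
Local Notation "x %:CC" := (real_complex R x) (at level 2, format "x %:CC").

Definition is_cstar_alg (A : algType C) (star : A -> A) (nrm : A -> R) : Prop :=
  (
      (forall x y, star (x + y) = star x + star y) /\
      (forall (c : C) x, star (c *: x) = c^* *: star x) /\
      (forall x y, star (x * y) = star y * star x) /\
      (forall x, star (star x) = x) /\
      (forall x, 0 <= nrm x) /\ (forall x, nrm x = 0 -> x = 0) /\
      (forall x y, nrm (x + y) <= nrm x + nrm y) /\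
      (forall (c : C) x, (nrm (c *: x))%:CC = `|c| * (nrm x)%:CC) /\
      (forall x y, nrm (x * y) <= nrm x * nrm y) /\
      (forall x, nrm (star x * x) = nrm x ^+ 2) /\
      (forall u : nat -> A,
        (forall e : R, 0 < e -> exists N, forall m n, (N <= m)%N -> (N <= n)%N ->
            nrm (u m - u n) < e) ->
        exists l, forall e : R, 0 < e -> exists N, forall n, (N <= n)%N ->
            nrm (u n - l) < e)).

Definition is_star_hom (A B : algType C) (sA : A -> A) (sB : B -> B) (f : A -> B) :=
  [/\ (forall x y, f (x + y) = f x + f y),
      (forall (c : C) x, f (c *: x) = c *: f x),
      (forall x y, f (x * y) = f x * f y),
      (forall x, f (sA x) = sB (f x)) &
      f 1 = 1].

(* X is a complex vector space with a right A-action [act] and an A-valued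
   inner product [ip] ((x|y)_A = ip x y, linear in the second variable),
   complete for the norm ||x|| = ||(x|x)_A||^(1/2). *)
Definition is_hilbert_module (A : algType C) (sA : A -> A) (nA : A -> R)
    (X : lmodType C) (act : X -> A -> X) (ip : X -> X -> A) : Prop :=
  (
      (forall x y a, act (x + y) a = act x a + act y a) /\
      (forall x a b, act x (a + b) = act x a + act x b) /\
      (forall x a b, act (act x a) b = act x (a * b)) /\ (forall x, act x 1 = x) /\
      (forall (c : C) x a, act (c *: x) a = c *: act x a /\ act x (c *: a) = c *: act x a) /\
      (forall x y z, ip x (y + z) = ip x y + ip x z) /\
      (forall (c : C) x y, ip x (c *: y) = c *: ip x y) /\
      (forall x y a, ip x (act y a) = ip x y * a) /\ (forall x y, sA (ip x y) = ip y x) /\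
      (forall x, exists b, ip x x = sA b * b) /\ (forall x, ip x x = 0 -> x = 0) /\
      (forall u : nat -> X,
        (forall e : R, 0 < e -> exists N, forall m n, (N <= m)%N -> (N <= n)%N ->
            nA (ip (u m - u n) (u m - u n)) < e) ->
        exists l, forall e : R, 0 < e -> exists N, forall n, (N <= n)%N ->
            nA (ip (u n - l) (u n - l)) < e)).

Definition adjoint_of (A : algType C) (X : lmodType C) (ip : X -> X -> A)
    (T T' : X -> X) : Prop :=
  forall x y, ip (T x) y = ip x (T' y).

Definition adjointable (A : algType C) (X : lmodType C) (ip : X -> X -> A)
    (T : X -> X) : Prop := exists T', adjoint_of ip T T'.

Definition is_left_action (A : algType C) (sA : A -> A) (X : lmodType C)
    (ip : X -> X -> A) (phi : A -> X -> X) : Prop :=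
  ( (forall a, adjointable ip (phi a)) /\
      (forall a b x, phi (a + b) x = phi a x + phi b x) /\
      (forall (c : C) a x, phi (c *: a) x = c *: phi a x) /\
      (forall a b x, phi (a * b) x = phi a (phi b x)) /\
      (forall a, adjoint_of ip (phi a) (phi (sA a))) /\
      (forall a b, (forall x, phi a x = phi b x) -> a = b)).

Definition is_hilbert_bimodule (A : algType C) (sA : A -> A) (nA : A -> R)
    (X : lmodType C) (act : X -> A -> X) (ip : X -> X -> A) (phi : A -> X -> X) :=
  is_hilbert_module sA nA act ip /\ is_left_action sA ip phi.

Definition full (A : algType C) (nA : A -> R) (X : lmodType C)
    (ip : X -> X -> A) : Prop :=
  forall (a : A) (e : R), 0 < e ->
    exists s : seq (C * X * X),
      nA (a - \sum_(t <- s) t.1.1 *: ip t.1.2 t.2) < e.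

Definition is_basis (A : algType C) (X : lmodType C) (act : X -> A -> X)
    (ip : X -> X -> A) (n : nat) (u : 'I_n -> X) : Prop :=
  forall x, x = \sum_(i < n) act (u i) (ip (u i) x).

Inductive gen_by (A : algType C) (X : lmodType C) (O : algType C) (sO : O -> O)
    (iota : A -> O) (S : X -> O) : O -> Prop :=
  | gen_A a : gen_by sO iota S (iota a)
  | gen_S x : gen_by sO iota S (S x)
  | gen_add s t : gen_by sO iota S s -> gen_by sO iota S t -> gen_by sO iota S (s + t)
  | gen_scale (c : C) t : gen_by sO iota S t -> gen_by sO iota S (c *: t)
  | gen_mul s t : gen_by sO iota S s -> gen_by sO iota S t -> gen_by sO iota S (s * t)
  | gen_star t : gen_by sO iota S t -> gen_by sO iota S (sO t).

Definition OX_relations (A : algType C) (sA : A -> A) (X : lmodType C)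
    (act : X -> A -> X) (ip : X -> X -> A) (phi : A -> X -> X)
    (n : nat) (u : 'I_n -> X)
    (B : algType C) (sB : B -> B) (rho : A -> B) (T : X -> B) : Prop :=
  ( is_star_hom sA sB rho /\
      (forall x y, T (x + y) = T x + T y) /\ (forall (c : C) x, T (c *: x) = c *: T x) /\
      (forall x a, T (act x a) = T x * rho a) /\
      (forall x a, T (phi a x) = rho a * T x) /\
      (forall x y, sB (T x) * T y = rho (ip x y)) /\
      \sum_(i < n) T (u i) * sB (T (u i)) = 1).

Definition is_OX (A : algType C) (sA : A -> A) (X : lmodType C)
    (act : X -> A -> X) (ip : X -> X -> A) (phi : A -> X -> X)
    (n : nat) (u : 'I_n -> X)
    (O : algType C) (sO : O -> O) (nO : O -> R) (iota : A -> O) (S : X -> O) : Prop :=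
  [/\ is_cstar_alg sO nO,
      OX_relations sA act ip phi u sO iota S,
      (forall (t : O) (e : R), 0 < e -> exists g, gen_by sO iota S g /\ nO (t - g) < e) &
      (forall (B : algType C) (sB : B -> B) (nB : B -> R) (rho : A -> B) (T : X -> B),
         is_cstar_alg sB nB -> OX_relations sA act ip phi u sB rho T ->
         exists Psi : O -> B, is_star_hom sO sB Psi /\
           (forall a, Psi (iota a) = rho a) /\ (forall x, Psi (S x) = T x))].

(* sigma(T) = sum_i u_i T u_i^*  (u_i identified with S_{u_i}) *)
Definition sigma (X : lmodType C) (O : algType C) (sO : O -> O) (S : X -> O)
    (n : nat) (u : 'I_n -> X) (t : O) : O :=
  \sum_(i < n) S (u i) * t * sO (S (u i)).

Definition in_commutant (A : algType C) (O : algType C) (iota : A -> O) (t : O) : Prop :=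
  forall a, iota a * t = t * iota a.

End CStar.

From HB Require Import structures.
From mathcomp Require Import all_boot all_order all_algebra.
From mathcomp Require Import reals.
From mathcomp.real_closed Require Import complex.
From mathcomp Require Import lra.
Set Implicit Arguments. Unset Strict Implicit. Unset Printing Implicit Defensive.
Import Order.TTheory GRing.Theory Num.Theory.
Local Open Scope ring_scope.

(* For T in the commutant A', the relations S_x^* S_y = (x|y) and
   x = sum_i u_i (u_i|x) give sigma(T) S_x = S_x T for every basis {u_i}.
   Multiplicativity follows at once; independence of the basis follows by
   writing sigma_v(T) = sigma_v(T) sum_i S_{u_i} S_{u_i}^*.  For injectivity,
   sigma(D) = 0 with D in A' forces D S_x^* = 0, hence D (x|y)_A = 0; by
   fullness some combination of inner products lies within 1/2 of 1, so it is
   right invertible (Neumann series) and D = 0. *)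

Lemma exprn_eventually_lt (R : realType) (r : R) : 0 <= r -> r <= 2^-1 ->
  forall e : R, 0 < e -> exists N, forall n, (N <= n)%N -> r ^+ n < e.
Proof.
move=> r_ge0 r_le e e_gt0.
have einv_ge0 : 0 <= e^-1 by rewrite invr_ge0 ltW.
pose N := Num.bound e^-1; have N_gt : e^-1 < N%:R := archi_boundP einv_ge0.
exists N => n Nn.
have N_gt0 : (0 : R) < N%:R by apply: le_lt_trans N_gt.
have r_le1 : r <= 1 by apply: le_trans r_le _; rewrite invf_le1 ?ler1n.
apply: le_lt_trans (ler_wiXn2l r_ge0 r_le1 Nn) _.
have rN_le : r ^+ N * N%:R <= 1.
  have N_le : (N%:R : R) <= 2 ^+ N by rewrite -natrX ler_nat ltnW // ltn_expl.
  apply: le_trans (_ : (r * 2) ^+ N <= 1); last by apply: exprn_ile1; lra.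
  by rewrite exprMn ler_wpM2l // exprn_ge0.
have eN_gt : 1 < e * N%:R by rewrite -[X in X < _](mulfV (lt0r_neq0 e_gt0)) ltr_pM2l.
by rewrite -(ltr_pM2r N_gt0); apply: le_lt_trans rN_le eN_gt.
Qed.

Lemma geometric_sum_le2 (R : realType) (r : R) k : 0 <= r -> r <= 2^-1 ->
  \sum_(i < k) r ^+ i <= 2.
Proof.
move=> r_ge0 r_le; elim: k => [|k IHk]; first by rewrite big_ord0.
rewrite big_ord_recl expr0.
under eq_bigr do rewrite exprS.
have sum_ge0 : 0 <= \sum_(i < k) r ^+ i by apply: sumr_ge0 => i _; apply: exprn_ge0.
rewrite -mulr_sumr; nra.
Qed.

Section BanachAlgebra.
Variables (R : realType) (A : algType R[i]).

Record banach_alg (nA : A -> R) : Prop := BanachAlg {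
  banach_ge0 : forall x, 0 <= nA x;
  banach_eq0 : forall x, nA x = 0 -> x = 0;
  banach_triangle : forall x y, nA (x + y) <= nA x + nA y;
  banach_scale : forall (c : R[i]) x,
    real_complex R (nA (c *: x)) = `|c| * real_complex R (nA x);
  banach_submul : forall x y, nA (x * y) <= nA x * nA y;
  banach_one : nA 1 <= 1;
  banach_complete : forall u : nat -> A,
    (forall e : R, 0 < e -> exists N, forall m n, (N <= m)%N -> (N <= n)%N ->
        nA (u m - u n) < e) ->
    exists l, forall e : R, 0 < e -> exists N, forall n, (N <= n)%N ->
        nA (u n - l) < e }.

Lemma cstar_banach_alg (sA : A -> A) (nA : A -> R) :
  is_cstar_alg sA nA -> banach_alg nA.
Proof.
move=> [_ [_ [sAM [sAK [n_ge0 [n_eq0 [nD [nZ [nM [nC n_complete]]]]]]]]]].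
split=> //.
have sA1 : sA 1 = 1 by have := sAM (sA 1) 1; rewrite mulr1 !sAK mulr1.
have n1_sq : nA 1 = nA 1 ^+ 2 by rewrite -nC sA1 mul1r.
by have := n_ge0 1; rewrite expr2 in n1_sq; nra.
Qed.

Variables (nA : A -> R) (hA : banach_alg nA).

Lemma banach_normN x : nA (- x) = nA x.
Proof. by apply: complexI; rewrite -scaleN1r (banach_scale hA) normrN1 mul1r. Qed.

Lemma banach_norm0 : nA 0 = 0.
Proof. by apply: complexI; rewrite -(scale0r 0) (banach_scale hA) normr0 mul0r. Qed.

Lemma banach_distC x y : nA (x - y) = nA (y - x).
Proof. by rewrite -banach_normN opprB. Qed.

Lemma banach_norm_sum k (F : 'I_k -> A) : nA (\sum_(i < k) F i) <= \sum_(i < k) nA (F i).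
Proof.
elim/big_rec2: _ => [|i y1 y2 _ IH]; first by rewrite banach_norm0.
by apply: le_trans (banach_triangle hA _ _) _; rewrite lerD2l.
Qed.

Lemma banach_normX x k : nA (x ^+ k) <= nA x ^+ k.
Proof.
elim: k => [|k IHk]; first by rewrite !expr0 (banach_one hA).
rewrite !exprS; apply: le_trans (banach_submul hA _ _) _.
by apply: ler_wpM2l; first exact: banach_ge0.
Qed.

Lemma neumann_series_cvg (b : A) : nA b <= 2^-1 ->
  exists l, forall e : R, 0 < e -> exists N, forall n, (N <= n)%N ->
    nA (\sum_(i < n) b ^+ i - l) < e.
Proof.
move=> b_le; set r := nA b; have r_ge0 : 0 <= r := banach_ge0 hA b.
pose P k := \sum_(i < k) b ^+ i.
have P_tail m k : nA (P (m + k)%N - P m) <= r ^+ m * 2.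
  have -> : P (m + k)%N - P m = b ^+ m * \sum_(i < k) b ^+ i.
    rewrite /P big_split_ord /= addrC addrK mulr_sumr.
    by apply: eq_bigr => i _; rewrite exprD.
  apply: le_trans (banach_submul hA _ _) _.
  apply: ler_pM; [exact: banach_ge0 | exact: banach_ge0 | exact: banach_normX |].
  apply: le_trans (banach_norm_sum _) (le_trans _ (geometric_sum_le2 k r_ge0 b_le)).
  by apply: ler_sum => i _; apply: banach_normX.
apply: (banach_complete hA) => e e_gt0.
have [N HN] := exprn_eventually_lt r_ge0 b_le (divr_gt0 e_gt0 (ltr0n _ 2)).
exists N => m n Nm Nn.
wlog mn : m n Nm Nn / (n <= m)%N.
  by move=> W; case/orP: (leq_total n m) => h; [|rewrite banach_distC]; apply: W.
rewrite -(subnKC mn); apply: le_lt_trans (P_tail _ _) _.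
by have := HN n Nn; lra.
Qed.

Lemma rinv_near1 (a : A) : nA (1 - a) <= 2^-1 -> exists l, a * l = 1.
Proof.
set b := 1 - a => b_le; have [l Hl] := neumann_series_cvg b_le.
have a_partial n : a * \sum_(i < n) b ^+ i = 1 - b ^+ n.
  have := subrX1 b n; have -> : b - 1 = - a by rewrite /b addrAC subrr add0r.
  by rewrite mulNr => /(congr1 -%R); rewrite opprK => <-; rewrite opprB.
exists l; apply/eqP; rewrite -subr_eq0; apply/eqP/(banach_eq0 hA).
apply/le_anti; rewrite banach_ge0 // andbT; apply/ler_addgt0Pr => e e_gt0.
have a_gt0 : 0 < nA a + 1 by have := banach_ge0 hA a; lra.
set e' := e / (nA a + 1); have e'_gt0 : 0 < e' by rewrite divr_gt0.
have [N1 H1] := Hl e' e'_gt0.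
have [N2 H2] := exprn_eventually_lt (banach_ge0 hA b) b_le e'_gt0.
pose n := maxn N1 N2; set P := \sum_(i < n) b ^+ i.
have -> : a * l - 1 = a * (l - P) - b ^+ n.
  by rewrite mulrBr a_partial opprB addrA addrAC addrK.
apply: le_trans (banach_triangle hA _ _) _; rewrite banach_normN.
have aP_le : nA (a * (l - P)) <= nA a * e'.
  apply: le_trans (banach_submul hA _ _) _; rewrite banach_distC.
  by rewrite ler_wpM2l ?banach_ge0 // ltW // H1 // leq_maxl.
have bn_le : nA (b ^+ n) <= e'.
  exact: ltW (le_lt_trans (banach_normX b n) (H2 n (leq_maxr _ _))).
have -> : e = e' * (nA a + 1) by rewrite divfK ?gt_eqF.
by have := banach_ge0 hA a; nra.
Qed.

End BanachAlgebra.

Definition ip_comb (R : realType) (A : algType R[i]) (X : lmodType R[i])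
    (ip : X -> X -> A) (s : seq (R[i] * X * X)) : A :=
  \sum_(q <- s) q.1.1 *: ip q.1.2 q.2.

Lemma full_ip_comb_rinv (R : realType) (A : algType R[i]) (sA : A -> A) (nA : A -> R)
    (X : lmodType R[i]) (ip : X -> X -> A) :
  is_cstar_alg sA nA -> full nA ip -> exists s (l : A), ip_comb ip s * l = 1.
Proof.
move=> /cstar_banach_alg hA hfull.
have [s hs] : exists s, nA (1 - ip_comb ip s) < 2^-1 by apply: hfull; rewrite invr_gt0.
by have [l hl] := rinv_near1 hA (ltW hs); exists s, l.
Qed.

Section CstarInvolution.
Variables (R : realType) (O : algType R[i]) (sO : O -> O) (nO : O -> R).
Hypothesis hO : is_cstar_alg sO nO.

Lemma cstar_starD x y : sO (x + y) = sO x + sO y.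
Proof. by case: hO. Qed.

Lemma cstar_starM x y : sO (x * y) = sO y * sO x.
Proof. by case: hO => _ [_ []]. Qed.

Lemma cstar_starK x : sO (sO x) = x.
Proof. by case: hO => _ [_ [_ []]]. Qed.

End CstarInvolution.

Lemma big_morph_additive (U V : zmodType) (f : U -> V) :
  {morph f : x y / x + y} ->
  forall (I : Type) (r : seq I) (F : I -> U), f (\sum_(i <- r) F i) = \sum_(i <- r) f (F i).
Proof.
move=> fD I r F; apply: (big_morph f fD).
by apply: (addrI (f 0)); rewrite -fD !addr0.
Qed.

Section SigmaOnCommutant.
Variables (R : realType) (A : algType R[i]) (sA : A -> A)
  (X : lmodType R[i]) (act : X -> A -> X) (ip : X -> X -> A)
  (O : algType R[i]) (sO : O -> O) (iota : A -> O) (S : X -> O).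
Hypotheses (sOD : forall x y, sO (x + y) = sO x + sO y)
  (sOM : forall x y, sO (x * y) = sO y * sO x) (sOK : involutive sO)
  (sAK : involutive sA)
  (iotaD : forall a b, iota (a + b) = iota a + iota b)
  (iotaZ : forall (c : R[i]) a, iota (c *: a) = c *: iota a)
  (iotaM : forall a b, iota (a * b) = iota a * iota b)
  (iotaS : forall a, iota (sA a) = sO (iota a)) (iota1 : iota 1 = 1)
  (SD : forall x y, S (x + y) = S x + S y)
  (Sact : forall x a, S (act x a) = S x * iota a)
  (SS : forall x y, sO (S x) * S y = iota (ip x y)).

Local Notation sigma := (sigma sO S).
Local Notation commuting := (in_commutant iota).

Lemma commutantB s t : commuting s -> commuting t -> commuting (s - t).
Proof. by move=> hs ht a; rewrite mulrBr mulrBl hs ht. Qed.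

Lemma commutant_star t : commuting t -> commuting (sO t).
Proof. by move=> ht a; rewrite -[a]sAK iotaS -!sOM ht. Qed.

Lemma S_basis_expansion m (v : 'I_m -> X) : is_basis act ip v ->
  forall x, \sum_(j < m) S (v j) * iota (ip (v j) x) = S x.
Proof.
move=> hv x; rewrite {2}(hv x) (big_morph_additive SD).
by apply: eq_bigr => j _; rewrite Sact.
Qed.

Lemma sigma_mulS m (v : 'I_m -> X) t x : is_basis act ip v -> commuting t ->
  sigma v t * S x = S x * t.
Proof.
move=> hv ht; rewrite /sigma mulr_suml -[in RHS](S_basis_expansion hv) mulr_suml.
by apply: eq_bigr => j _; rewrite -!mulrA SS -ht.
Qed.

Lemma sigma_star m (v : 'I_m -> X) t : sigma v (sO t) = sO (sigma v t).
Proof.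
rewrite /sigma (big_morph_additive sOD).
by apply: eq_bigr => i _; rewrite !sOM sOK mulrA.
Qed.

Lemma Sstar_mul_sigma m (v : 'I_m -> X) t x : is_basis act ip v -> commuting t ->
  sO (S x) * sigma v t = t * sO (S x).
Proof.
move=> hv ht; rewrite -[sigma v t]sOK -sigma_star -sOM.
by rewrite (sigma_mulS _ hv (commutant_star ht)) sOM sOK.
Qed.

Lemma sigmaD m (v : 'I_m -> X) s t : sigma v (s + t) = sigma v s + sigma v t.
Proof. by rewrite /sigma -big_split; apply: eq_bigr => i _; rewrite mulrDr mulrDl. Qed.

Lemma sigmaB m (v : 'I_m -> X) s t : sigma v (s - t) = sigma v s - sigma v t.
Proof. by rewrite /sigma -sumrB; apply: eq_bigr => i _; rewrite mulrBr mulrBl. Qed.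

Lemma sigmaZ m (v : 'I_m -> X) (c : R[i]) t : sigma v (c *: t) = c *: sigma v t.
Proof.
by rewrite /sigma scaler_sumr; apply: eq_bigr => i _; rewrite -scalerAr -scalerAl.
Qed.

Lemma sigmaM m (v : 'I_m -> X) s t : is_basis act ip v -> commuting s ->
  sigma v (s * t) = sigma v s * sigma v t.
Proof.
move=> hv hs; rewrite {3}/sigma mulr_sumr.
by apply: eq_bigr => j _; rewrite !mulrA sigma_mulS.
Qed.

Variables (n : nat) (u : 'I_n -> X).
Hypothesis Su1 : \sum_(i < n) S (u i) * sO (S (u i)) = 1.

Lemma sigma1 : sigma u 1 = 1.
Proof. by rewrite /sigma; under eq_bigr do rewrite mulr1. Qed.

Lemma sigma_basis_indep m (v : 'I_m -> X) t : is_basis act ip v -> commuting t ->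
  sigma v t = sigma u t.
Proof.
move=> hv ht; rewrite -[sigma v t]mulr1 -Su1 mulr_sumr.
by apply: eq_bigr => j _; rewrite mulrA sigma_mulS.
Qed.

Lemma sigma_kernel_ann_ip d x y : is_basis act ip u -> commuting d ->
  sigma u d = 0 -> d * iota (ip x y) = 0.
Proof.
by move=> hu hd d0; rewrite -SS mulrA -(Sstar_mul_sigma _ hu hd) d0 mulr0 mul0r.
Qed.

Lemma sigma_inj s t : is_basis act ip u ->
  (exists (q : seq (R[i] * X * X)) (l : A), ip_comb ip q * l = 1) ->
  commuting s -> commuting t -> sigma u s = sigma u t -> s = t.
Proof.
move=> hu [q [l ql1]] hs ht st; apply/eqP; rewrite -subr_eq0; apply/eqP.
have hd := commutantB hs ht.
have d0 : sigma u (s - t) = 0 by rewrite sigmaB st subrr.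
rewrite -[s - t]mulr1 -iota1 -ql1 iotaM mulrA /ip_comb.
rewrite (big_morph_additive iotaD) mulr_sumr big1 ?mul0r // => p _.
by rewrite iotaZ -scalerAr sigma_kernel_ann_ip ?scaler0.
Qed.

End SigmaOnCommutant.

Theorem lemma3p1 (R : realType)
    (A : algType R[i]) (sA : A -> A) (nA : A -> R)
    (X : lmodType R[i]) (act : X -> A -> X) (ip : X -> X -> A) (phi : A -> X -> X)
    (n : nat) (u : 'I_n -> X)
    (O : algType R[i]) (sO : O -> O) (nO : O -> R) (iota : A -> O) (S : X -> O) :
  is_cstar_alg sA nA ->
  is_hilbert_bimodule sA nA act ip phi ->
  full nA ip ->
  is_basis act ip u ->
  is_OX sA act ip phi u sO nO iota S ->
  (* sigma restricted to A' is a unital injective *-homomorphism *)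
  ((forall s t, in_commutant iota s -> in_commutant iota t ->
       sigma sO S u (s + t) = sigma sO S u s + sigma sO S u t) /\
   (forall (c : R[i]) t, in_commutant iota t ->
       sigma sO S u (c *: t) = c *: sigma sO S u t) /\
   (forall s t, in_commutant iota s -> in_commutant iota t ->
       sigma sO S u (s * t) = sigma sO S u s * sigma sO S u t) /\
   (forall t, in_commutant iota t -> sigma sO S u (sO t) = sO (sigma sO S u t)) /\
   sigma sO S u 1 = 1 /\
   (forall s t, in_commutant iota s -> in_commutant iota t ->
       sigma sO S u s = sigma sO S u t -> s = t)) /\
  (* and it does not depend on the choice of the basis *)
  (forall (m : nat) (v : 'I_m -> X), is_basis act ip v ->
     forall t, in_commutant iota t -> sigma sO S v t = sigma sO S u t).
Proof.
move=> hA _ hfull hu [hO hrel _ _].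
case: hrel => -[iotaD iotaZ iotaM iotaS iota1] [SD [_ [Sact [_ [SS Su1]]]]].
have sOD := cstar_starD hO; have sOM := cstar_starM hO; have sOK := cstar_starK hO.
have sAK := cstar_starK hA.
have ip_rinv := full_ip_comb_rinv hA hfull.
split; [split; [|split; [|split; [|split; [|split]]]] |].
- by move=> s t _ _; apply: sigmaD.
- by move=> c t _; apply: sigmaZ.
- by move=> s t hs _; apply: sigmaM.
- by move=> t _; apply: sigma_star.
- exact: sigma1.
- by move=> s t; apply: (sigma_inj sOD sOM sOK sAK iotaD iotaZ iotaM iotaS iota1 SD Sact SS hu).
- by move=> m v hv t ht; apply: sigma_basis_indep.
Qed.
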